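(* The map $\Phi:\mathcal B\to\widehat{\mathbb C}\setminus\overline\Delta$, $\Phi(B_{p,q})=c$ (the critical point of $B_{p,q}$ outside $\overline\Delta$), is a homeomorphism from $\mathcal B$ onto $U$.
   Context: $\Delta$ is the unit disk. For $|p|>1$, $|q|<1$, $B_{p,q}(z)=z\,\frac{z-p}{1-\bar pz}\,\frac{z-q}{1-\bar qz}$. $\mathcal B$ is the set of such $B_{p,q}$ (with $|p|>1$, $|q|<1$) which have a double critical point at $1$ and whose other two critical points are $c$ and $1/\bar c$ with $c\in\widehat{\mathbb C}\setminus\overline\Delta$ (for $c=\infty$ this is $B_{3,0}$). Let $\gamma=\{re^{it}: r+r^{-1}+4\cos t=0,\ r>1\}$, a curve separating $\widehat{\mathbb C}\setminus\overline\Delta$ into two components; $U$ is the component containing $2$ and $\infty$. *)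

From Stdlib Require Import Reals List.
Import ListNotations.
Open Scope R_scope.

Definition Cx : Type := (R * R)%type.
Definition C0 : Cx := (0, 0).
Definition C1 : Cx := (1, 0).
Definition Cof (r : R) : Cx := (r, 0).
Definition Cadd (z w : Cx) : Cx := (fst z + fst w, snd z + snd w).
Definition Copp (z : Cx) : Cx := (- fst z, - snd z).
Definition Csub (z w : Cx) : Cx := Cadd z (Copp w).
Definition Cmul (z w : Cx) : Cx :=
  (fst z * fst w - snd z * snd w, fst z * snd w + snd z * fst w).
Definition Cconj (z : Cx) : Cx := (fst z, - snd z).
Definition Cnorm2 (z : Cx) : R := fst z * fst z + snd z * snd z.
Definition Cnorm (z : Cx) : R := sqrt (Cnorm2 z).
Definition Cinv (z : Cx) : Cx := (fst z / Cnorm2 z, - snd z / Cnorm2 z).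

(** Riemann sphere: [None] is the point at infinity. *)
Definition sphere : Type := option Cx.

Definition chordal (a b : sphere) : R :=
  match a, b with
  | Some z, Some w =>
      2 * Cnorm (Csub z w) / (sqrt (1 + Cnorm2 z) * sqrt (1 + Cnorm2 w))
  | Some z, None | None, Some z => 2 / sqrt (1 + Cnorm2 z)
  | None, None => 0
  end.

(** B_{p,q}(z) = N(z)/D(z) with
    N(z) = z (z - p) (z - q),  D(z) = (1 - conj p z)(1 - conj q z). *)
Definition Bnum (p q z : Cx) : Cx := Cmul z (Cmul (Csub z p) (Csub z q)).
Definition Bden (p q z : Cx) : Cx :=
  Cmul (Csub C1 (Cmul (Cconj p) z)) (Csub C1 (Cmul (Cconj q) z)).
Definition Bnum' (p q z : Cx) : Cx :=
  Cadd (Cmul (Csub z p) (Csub z q))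
       (Cadd (Cmul z (Csub z q)) (Cmul z (Csub z p))).
Definition Bden' (p q z : Cx) : Cx :=
  Cadd (Copp (Cmul (Cconj p) (Csub C1 (Cmul (Cconj q) z))))
       (Copp (Cmul (Cconj q) (Csub C1 (Cmul (Cconj p) z)))).

(** Wronskian W = N' D - N D' (so B' = W / D^2 away from poles);
    its roots (with multiplicity) are the finite critical points of
    B_{p,q}, and infinity is critical with multiplicity 2*3-2 - deg W. *)
Definition Bwron (p q z : Cx) : Cx :=
  Csub (Cmul (Bnum' p q z) (Bden p q z)) (Cmul (Bnum p q z) (Bden' p q z)).

Definition lin_factor (z : Cx) (a : sphere) : Cx :=
  match a with Some a => Csub z a | None => C1 end.

(** [crit_divisor p q l]: the list [l] (length 4 = 2 deg - 2) is the list of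
    critical points of B_{p,q}, counted with multiplicity, infinity being
    [None]: W = k * prod_{finite a in l} (z - a) with k <> 0, and the number
    of [None] entries is 4 - deg W. *)
Definition crit_divisor (p q : Cx) (l : list sphere) : Prop :=
  length l = 4%nat /\
  exists k : Cx, k <> C0 /\
    forall z : Cx, Bwron p q z = Cmul k (fold_right (fun a acc => Cmul (lin_factor z a) acc) C1 l).

Definition reflect (c : sphere) : sphere :=
  match c with Some c => Some (Cinv (Cconj c)) | None => Some C0 end.

Definition outside_disk (c : sphere) : Prop :=
  match c with Some z => Cnorm z > 1 | None => True end.

Definition is_Phi (p q : Cx) (c : sphere) : Prop :=
  outside_disk c /\ crit_divisor p q [Some C1; Some C1; c; reflect c].

Definition inB (p q : Cx) : Prop :=
  Cnorm p > 1 /\ Cnorm q < 1 /\ exists c : sphere, is_Phi p q c.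

Definition pdist (p q p' q' : Cx) : R :=
  Rmax (Cnorm (Csub p p')) (Cnorm (Csub q q')).

Definition gamma (z : Cx) : Prop :=
  exists r t : R, r > 1 /\ r + / r + 4 * cos t = 0 /\ z = (r * cos t, r * sin t).

Definition Xset (w : sphere) : Prop :=
  match w with Some z => Cnorm z > 1 /\ ~ gamma z | None => True end.

Definition rel_open (S A : sphere -> Prop) : Prop :=
  forall x, S x -> A x -> exists d, d > 0 /\
    forall y, S y -> chordal x y < d -> A y.
Definition connected (S : sphere -> Prop) : Prop :=
  forall A : sphere -> Prop,
    rel_open S A -> rel_open S (fun x => ~ A x) ->
    forall x y, S x -> S y -> A x -> A y.

(** U = connected component of X containing 2 (it also contains infinity). *)
Definition Uset (w : sphere) : Prop :=
  exists S : sphere -> Prop,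
    (forall x, S x -> Xset x) /\ connected S /\ S (Some (Cof 2)) /\ S w.

From Pilot Require Import Defs.
From Stdlib Require Import Reals List.
Import ListNotations.
Open Scope R_scope.
From Stdlib Require Import Lra Psatz Classical.
(* Stdlib's Reals also exports a constant [C1]; keep the complex one. *)
Local Notation C1 := Defs.C1.

(* Write c for the critical point outside the disk, w = 1/conj(c) for its
   reflection (w = 0 when c is infinity), s = p + q and m = p q.  The
   Wronskian of B_{p,q} depends only on (s, m); matching it with
   (z - 1)^2 (conj(w) z - 1)(z - w) shows that the critical divisor is
   1, 1, c, 1/conj(c) exactly when side(w) = 1 + |w|^2 + 4 Re w is nonzero
   and (s, m) = (sum_of w, prod_of w)  [is_Phi_params, params_is_Phi].
   A discriminant identity shows that the roots p, q of X^2 - s X + m are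
   separated by the unit circle iff side(w) > 0  [disc_sign], so B is
   parametrised by the points of [Ureg] = {c : |c| > 1, side(1/conj c) > 0}.
   This region is U: it avoids gamma (where side vanishes), is connected
   along reflected radii, and is relatively clopen in X  [Ureg_sub_U,
   U_sub_Ureg].  Both Phi and its inverse are locally
   Lipschitz, as composites of (p, q) <-> (s, m)  [sum_prod_lip, roots_lip],
   (s, m) <-> w  [params_lip, point_of_params_lip, through the Klein map
   w |-> 2w / (1 + |w|^2)] and the reflection, a chordal isometry. *)

Ltac cx := cbv [Cof Cadd Csub Copp Cmul Cconj Cnorm2 Defs.C1 C0 Cinv fst snd] in *.

Lemma Rabs_le_inv (x a : R) : Rabs x <= a -> - a <= x <= a.
Proof. intros. pose proof (Rle_abs x); pose proof (Rle_abs (- x)); rewrite Rabs_Ropp in *; lra. Qed.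

Lemma Cnorm2_nonneg (z : Cx) : 0 <= Cnorm2 z.
Proof. destruct z as [a b]; cx; nra. Qed.

Lemma Cnorm_nonneg (z : Cx) : 0 <= Cnorm z.
Proof. apply sqrt_pos. Qed.

Lemma Cnorm_sq (z : Cx) : Cnorm z * Cnorm z = Cnorm2 z.
Proof. apply sqrt_sqrt, Cnorm2_nonneg. Qed.

Lemma Cnorm_gt1 (z : Cx) : Cnorm z > 1 <-> Cnorm2 z > 1.
Proof. pose proof (Cnorm_sq z); pose proof (Cnorm_nonneg z); split; intros; nra. Qed.

Lemma Cnorm_lt1 (z : Cx) : Cnorm z < 1 <-> Cnorm2 z < 1.
Proof. pose proof (Cnorm_sq z); pose proof (Cnorm_nonneg z); split; intros; nra. Qed.

Lemma Cnorm2_mul (a b : Cx) : Cnorm2 (Cmul a b) = Cnorm2 a * Cnorm2 b.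
Proof. destruct a, b; cx; ring. Qed.

Lemma Cnorm_mul (a b : Cx) : Cnorm (Cmul a b) = Cnorm a * Cnorm b.
Proof. unfold Cnorm; rewrite Cnorm2_mul; apply sqrt_mult_alt, Cnorm2_nonneg. Qed.

Lemma Cnorm2_eq0 (z : Cx) : Cnorm2 z = 0 -> z = C0.
Proof. destruct z as [a b]; cx; intros; f_equal; nra. Qed.

Lemma Cmul_eq0 (a b : Cx) : Cmul a b = C0 -> a = C0 \/ b = C0.
Proof.
  intros H. assert (Hn : Cnorm2 a * Cnorm2 b = 0) by (rewrite <- Cnorm2_mul, H; cx; ring).
  destruct (Rmult_integral _ _ Hn); [left|right]; apply Cnorm2_eq0; auto.
Qed.

Lemma Cnorm_real (c : R) (z : Cx) : Cnorm (Cmul (c, 0) z) = Rabs c * Cnorm z.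
Proof.
  rewrite Cnorm_mul. f_equal. unfold Cnorm; cx.
  rewrite <- sqrt_Rsqr_abs. unfold Rsqr; f_equal; ring.
Qed.

Lemma Cnorm_fst (z : Cx) : Rabs (fst z) <= Cnorm z.
Proof.
  destruct z as [a b]; unfold Cnorm; cx.
  rewrite <- sqrt_Rsqr_abs. apply sqrt_le_1_alt. unfold Rsqr; nra.
Qed.

Lemma Cnorm_snd (z : Cx) : Rabs (snd z) <= Cnorm z.
Proof.
  destruct z as [a b]; unfold Cnorm; cx.
  rewrite <- sqrt_Rsqr_abs. apply sqrt_le_1_alt. unfold Rsqr; nra.
Qed.

Lemma Cnorm_le_sum (z : Cx) : Cnorm z <= Rabs (fst z) + Rabs (snd z).
Proof.
  destruct z as [a b]; unfold Cnorm; cx.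
  pose proof (Rabs_pos a); pose proof (Rabs_pos b).
  rewrite <- (sqrt_square (Rabs a + Rabs b)) by lra.
  apply sqrt_le_1_alt.
  assert (a * a = Rabs a * Rabs a) by (rewrite <- Rabs_mult, Rabs_right; nra).
  assert (b * b = Rabs b * Rabs b) by (rewrite <- Rabs_mult, Rabs_right; nra).
  nra.
Qed.

Lemma Cdot_le (a b : Cx) : fst a * fst b + snd a * snd b <= Cnorm a * Cnorm b.
Proof.
  pose proof (Cnorm_sq a); pose proof (Cnorm_sq b).
  pose proof (Cnorm_nonneg a); pose proof (Cnorm_nonneg b).
  set (x := fst a * fst b + snd a * snd b).
  assert (Hsq : x * x <= Cnorm2 a * Cnorm2 b).
  { unfold x; destruct a as [a1 a2], b as [b1 b2]; cx.
    pose proof (Rle_0_sqr (a1 * b2 - a2 * b1)); unfold Rsqr in *; nra. }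
  assert (0 <= Cnorm a * Cnorm b) by (apply Rmult_le_pos; auto).
  nra.
Qed.

Lemma Cnorm_triang (a b : Cx) : Cnorm (Cadd a b) <= Cnorm a + Cnorm b.
Proof.
  pose proof (Cnorm_sq a); pose proof (Cnorm_sq b); pose proof (Cnorm_sq (Cadd a b)).
  pose proof (Cnorm_nonneg a); pose proof (Cnorm_nonneg b); pose proof (Cnorm_nonneg (Cadd a b)).
  pose proof (Cdot_le a b).
  assert (Cnorm2 (Cadd a b) = Cnorm2 a + Cnorm2 b + 2 * (fst a * fst b + snd a * snd b))
    by (destruct a, b; cx; ring).
  nra.
Qed.

Lemma Cnorm_opp (a : Cx) : Cnorm (Copp a) = Cnorm a.
Proof. destruct a; unfold Cnorm; cx; f_equal; ring. Qed.

Lemma Cnorm_conj (a : Cx) : Cnorm (Cconj a) = Cnorm a.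
Proof. destruct a; unfold Cnorm; cx; f_equal; ring. Qed.

Lemma Cnorm_sub_sym (a b : Cx) : Cnorm (Csub a b) = Cnorm (Csub b a).
Proof. destruct a, b; unfold Cnorm; cx; f_equal; ring. Qed.

Lemma Cnorm_sub_triang (a b : Cx) : Cnorm (Csub a b) <= Cnorm a + Cnorm b.
Proof. unfold Csub; rewrite <- (Cnorm_opp b); apply Cnorm_triang. Qed.

Lemma Cnorm_rev_triang (a b : Cx) : Cnorm a - Cnorm b <= Cnorm (Csub a b).
Proof.
  assert (E : a = Cadd (Csub a b) b) by (destruct a, b; cx; f_equal; ring).
  pose proof (Cnorm_triang (Csub a b) b). rewrite <- E in *. lra.
Qed.

Lemma Cnorm_sub_diag (a : Cx) : Cnorm (Csub a a) = 0.
Proof.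
  destruct a as [x y]; unfold Cnorm; cx.
  replace ((x + - x) * (x + - x) + (y + - y) * (y + - y)) with 0 by ring.
  apply sqrt_0.
Qed.

Lemma Cnorm_sub_eq0 (a b : Cx) : Cnorm (Csub a b) = 0 -> a = b.
Proof.
  intros H. assert (E : Cnorm2 (Csub a b) = 0) by (rewrite <- Cnorm_sq, H; ring).
  apply Cnorm2_eq0 in E. destruct a, b; cx. injection E; intros; f_equal; lra.
Qed.

Definition refl_in (c : sphere) : Cx :=
  match c with Some z => Cinv (Cconj z) | None => C0 end.
Definition refl_out (v : Cx) : sphere :=
  if Req_EM_T (Cnorm2 v) 0 then None else Some (Cinv (Cconj v)).

Lemma Cinv_conj_eq (z : Cx) : Cinv (Cconj z) = (fst z / Cnorm2 z, snd z / Cnorm2 z).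
Proof.
  destruct z as [a b]; cx.
  replace (a * a + - b * - b) with (a * a + b * b) by ring.
  f_equal; unfold Rdiv; ring.
Qed.

Lemma Cnorm2_inv_conj (z : Cx) : Cnorm2 z <> 0 -> Cnorm2 (Cinv (Cconj z)) = / Cnorm2 z.
Proof. intros H; rewrite Cinv_conj_eq. destruct z as [a b]; cx. field. auto. Qed.

Lemma inv_conj_invol (z : Cx) : Cnorm2 z <> 0 -> Cinv (Cconj (Cinv (Cconj z))) = z.
Proof.
  intros H. rewrite (Cinv_conj_eq (Cinv (Cconj z))), Cnorm2_inv_conj by auto.
  rewrite Cinv_conj_eq. destruct z as [a b]; cx. f_equal; field; auto.
Qed.

Lemma reflect_refl_in (c : sphere) : reflect c = Some (refl_in c).
Proof. destruct c; reflexivity. Qed.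

Lemma inv_gt1 (x : R) : x > 1 -> / x < 1.
Proof. intros H. apply (Rmult_lt_reg_l x); [lra|]. rewrite Rinv_r; lra. Qed.

Lemma inv_lt1 (x : R) : 0 < x < 1 -> / x > 1.
Proof. intros H. apply (Rmult_lt_reg_l x); [lra|]. rewrite Rinv_r; lra. Qed.

Lemma refl_in_lt1 (c : sphere) : outside_disk c -> Cnorm2 (refl_in c) < 1.
Proof.
  destruct c as [z|]; simpl; intros H; [|cx; lra].
  apply Cnorm_gt1 in H. rewrite Cnorm2_inv_conj by lra. apply inv_gt1; lra.
Qed.

Lemma refl_out_outside (v : Cx) : Cnorm2 v < 1 -> outside_disk (refl_out v).
Proof.
  intros H; unfold refl_out. destruct (Req_EM_T (Cnorm2 v) 0) as [e|e]; simpl; auto.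
  apply Cnorm_gt1. rewrite Cnorm2_inv_conj by auto.
  pose proof (Cnorm2_nonneg v). apply inv_lt1; lra.
Qed.

Lemma refl_out_in (c : sphere) : outside_disk c -> refl_out (refl_in c) = c.
Proof.
  destruct c as [z|]; simpl; intros H; unfold refl_out.
  - apply Cnorm_gt1 in H. rewrite Cnorm2_inv_conj by lra.
    destruct (Req_EM_T (/ Cnorm2 z) 0) as [e|e].
    + exfalso. apply (Rinv_neq_0_compat (Cnorm2 z)); lra.
    + rewrite inv_conj_invol by lra. reflexivity.
  - destruct (Req_EM_T (Cnorm2 C0) 0) as [e|e]; auto.
    exfalso; apply e; cx; ring.
Qed.

Lemma refl_in_out (v : Cx) : refl_in (refl_out v) = v.
Proof.
  unfold refl_out. destruct (Req_EM_T (Cnorm2 v) 0) as [e|e]; simpl.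
  - symmetry; apply Cnorm2_eq0; auto.
  - apply inv_conj_invol; auto.
Qed.

Lemma sqrt_ratio (A B C : R) : 0 <= A -> 0 < B -> 0 < C ->
  sqrt A / (sqrt B * sqrt C) = sqrt (A / (B * C)).
Proof. intros. rewrite sqrt_div_alt by nra. rewrite sqrt_mult_alt by lra. reflexivity. Qed.

Lemma chordal_fin_eq (u v : Cx) : chordal (Some u) (Some v) =
  2 * sqrt (Cnorm2 (Csub u v) / ((1 + Cnorm2 u) * (1 + Cnorm2 v))).
Proof.
  unfold chordal, Cnorm. pose proof (Cnorm2_nonneg u); pose proof (Cnorm2_nonneg v).
  rewrite <- sqrt_ratio by (try apply Cnorm2_nonneg; lra). unfold Rdiv; ring.
Qed.

Lemma chordal_infty_eq (u : Cx) : chordal (Some u) None = 2 * sqrt (/ (1 + Cnorm2 u)).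
Proof.
  pose proof (Cnorm2_nonneg u). simpl. rewrite sqrt_inv. field.
  apply Rgt_not_eq, sqrt_lt_R0; lra.
Qed.

Lemma chordal_refl_out (u v : Cx) :
  chordal (refl_out u) (refl_out v) = chordal (Some u) (Some v).
Proof.
  rewrite chordal_fin_eq. unfold refl_out.
  pose proof (Cnorm2_nonneg u); pose proof (Cnorm2_nonneg v).
  destruct (Req_EM_T (Cnorm2 u) 0) as [eu|eu];
    destruct (Req_EM_T (Cnorm2 v) 0) as [ev|ev].
  - apply Cnorm2_eq0 in eu, ev; subst. simpl; cx.
    replace ((0 + - 0) * (0 + - 0) + (0 + - 0) * (0 + - 0)) with 0 by ring.
    unfold Rdiv; rewrite Rmult_0_l, sqrt_0; ring.
  - apply Cnorm2_eq0 in eu; subst.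
    replace (chordal None (Some (Cinv (Cconj v))))
      with (chordal (Some (Cinv (Cconj v))) None) by reflexivity.
    rewrite chordal_infty_eq, Cnorm2_inv_conj by auto.
    do 2 f_equal. destruct v as [a b]; cx. field. split; [|auto]. nra.
  - apply Cnorm2_eq0 in ev; subst.
    rewrite chordal_infty_eq, Cnorm2_inv_conj by auto.
    do 2 f_equal. destruct u as [a b]; cx. field. split; [|auto]. nra.
  - rewrite chordal_fin_eq, !Cnorm2_inv_conj by auto. do 2 f_equal.
    rewrite !Cinv_conj_eq. destruct u as [a b], v as [c d]; cx. field.
    repeat split; auto; nra.
Qed.

Lemma chordal_refl_in (x y : sphere) : outside_disk x -> outside_disk y ->
  chordal x y = chordal (Some (refl_in x)) (Some (refl_in y)).
Proof.
  intros. rewrite <- chordal_refl_out, !refl_out_in by auto. reflexivity.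
Qed.

Lemma sqrt_1_plus_ge1 (x : R) : 0 <= x -> 1 <= sqrt (1 + x).
Proof. intros. rewrite <- sqrt_1 at 1. apply sqrt_le_1_alt. lra. Qed.

Lemma chordal_le_euclid (u v : Cx) : chordal (Some u) (Some v) <= 2 * Cnorm (Csub u v).
Proof.
  simpl. pose proof (sqrt_1_plus_ge1 _ (Cnorm2_nonneg u)).
  pose proof (sqrt_1_plus_ge1 _ (Cnorm2_nonneg v)).
  pose proof (Cnorm_nonneg (Csub u v)).
  set (D := sqrt (1 + Cnorm2 u) * sqrt (1 + Cnorm2 v)) in *.
  assert (1 <= D) by (unfold D; nra).
  unfold Rdiv. apply (Rmult_le_reg_r D); [lra|].
  rewrite Rmult_assoc, Rinv_l by lra. nra.
Qed.

Lemma euclid_le_chordal (u v : Cx) : Cnorm2 u <= 1 -> Cnorm2 v <= 1 ->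
  Cnorm (Csub u v) <= chordal (Some u) (Some v).
Proof.
  intros Hu Hv. simpl.
  pose proof (sqrt_1_plus_ge1 _ (Cnorm2_nonneg u)).
  pose proof (sqrt_1_plus_ge1 _ (Cnorm2_nonneg v)).
  pose proof (Cnorm_nonneg (Csub u v)).
  pose proof (Cnorm2_nonneg u); pose proof (Cnorm2_nonneg v).
  set (D := sqrt (1 + Cnorm2 u) * sqrt (1 + Cnorm2 v)) in *.
  assert (D <= 2).
  { unfold D. rewrite <- sqrt_mult_alt by lra.
    rewrite <- (sqrt_square 2) by lra. apply sqrt_le_1_alt. nra. }
  assert (1 <= D) by (unfold D; nra).
  unfold Rdiv. apply (Rmult_le_reg_r D); [lra|].
  rewrite Rmult_assoc, Rinv_l by lra. nra.
Qed.

Lemma refl_dist_le_chordal (x y : sphere) : outside_disk x -> outside_disk y ->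
  Cnorm (Csub (refl_in x) (refl_in y)) <= chordal x y.
Proof.
  intros Hx Hy. rewrite chordal_refl_in by auto.
  pose proof (refl_in_lt1 x Hx); pose proof (refl_in_lt1 y Hy).
  apply euclid_le_chordal; lra.
Qed.

(** The critical points in terms of the reflected point w = 1/conj(c).
    [side w] = 1 + |w|^2 + 4 Re w; [sum_of w] and [prod_of w] are the values
    of p + q and p q forced by the critical divisor 1, 1, 1/conj(w), w. *)
Definition side (w : Cx) : R := 1 + Cnorm2 w + 4 * fst w.
Definition sum_of (w : Cx) : Cx :=
  (3 * (2 * fst w + (1 + Cnorm2 w)) / side w, 6 * snd w / side w).
Definition prod_of (w : Cx) : Cx := (6 * fst w / side w, 6 * snd w / side w).

Definition crit_poly (w z : Cx) : Cx :=
  Cmul (Csub z C1) (Cmul (Csub z C1) (Cmul (Csub (Cmul (Cconj w) z) C1) (Csub z w))).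

Definition wron_sm (s m z : Cx) : Cx :=
  let z2 := Cmul z z in let z3 := Cmul z2 z in let z4 := Cmul z3 z in
  Cadd (Cmul (Cconj m) z4) (Cadd (Cmul (Cof (-2)) (Cmul (Cconj s) z3))
   (Cadd (Cmul (Cof (3 + Cnorm2 s - Cnorm2 m)) z2) (Cadd (Cmul (Cof (-2)) (Cmul s z)) m))).

Lemma Bwron_sm (p q z : Cx) : Bwron p q z = wron_sm (Cadd p q) (Cmul p q) z.
Proof.
  destruct p, q, z. cbv [Bwron Bnum Bden Bnum' Bden' wron_sm]. cx. f_equal; ring.
Qed.

Lemma wron_sm_crit (w z : Cx) : side w <> 0 ->
  wron_sm (sum_of w) (prod_of w) z = Cmul (6 / side w, 0) (crit_poly w z).
Proof.
  intros H. destruct w, z. cbv [wron_sm sum_of prod_of crit_poly side] in *. cx.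
  f_equal; field; auto.
Qed.

Definition divisor_prod (z : Cx) (l : list sphere) : Cx :=
  fold_right (fun a acc => Cmul (lin_factor z a) acc) C1 l.

Lemma divisor_prod_fin (z0 k z : Cx) : Cnorm2 z0 <> 0 ->
  Cmul k (divisor_prod z [Some C1; Some C1; Some z0; Some (Cinv (Cconj z0))])
  = Cmul (Cmul k z0) (crit_poly (Cinv (Cconj z0)) z).
Proof.
  intros H. destruct z0 as [a b], k, z. unfold divisor_prod, crit_poly; simpl. cx.
  f_equal; field; try split; auto; intros E; apply H; nra.
Qed.

Lemma divisor_prod_infty (k z : Cx) :
  Cmul k (divisor_prod z [Some C1; Some C1; None; Some C0]) = Cmul (Copp k) (crit_poly C0 z).
Proof. destruct k, z. unfold divisor_prod, crit_poly; simpl. cx. f_equal; ring. Qed.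

Lemma crit_divisor_poly (p q : Cx) (c : sphere) : outside_disk c ->
  crit_divisor p q [Some C1; Some C1; c; reflect c] ->
  exists K, K <> C0 /\ forall z, Bwron p q z = Cmul K (crit_poly (refl_in c) z).
Proof.
  intros Ho [_ [k [Hk HW]]]. destruct c as [z0|]; simpl in *.
  - apply Cnorm_gt1 in Ho. exists (Cmul k z0). split.
    + intros E. destruct (Cmul_eq0 _ _ E); auto. subst; cx; lra.
    + intros z. rewrite HW. apply (divisor_prod_fin z0 k z). lra.
  - exists (Copp k). split.
    + intros E; apply Hk. destruct k; cx. injection E; intros; f_equal; lra.
    + intros z. rewrite HW. apply (divisor_prod_infty k z).
Qed.

Lemma quartic_zero (a0 a1 a2 a3 a4 : R) :
  (forall t, a0 + a1 * t + a2 * (t * t) + a3 * (t * t * t) + a4 * (t * t * t * t) = 0) ->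
  a0 = 0 /\ a1 = 0 /\ a2 = 0 /\ a3 = 0 /\ a4 = 0.
Proof.
  intros H. pose proof (H 0); pose proof (H 1); pose proof (H (-1));
    pose proof (H 2); pose proof (H (-2)). lra.
Qed.

Lemma crit_coeffs (s1 s2 m1 m2 k1 k2 x y : R) :
  (forall t, wron_sm (s1, s2) (m1, m2) (t, 0) = Cmul (k1, k2) (crit_poly (x, y) (t, 0))) ->
  let N := 1 + (x * x + y * y) in
  k2 = 0 /\ m1 = k1 * x /\ m2 = k1 * y /\ 2 * s1 = k1 * (2 * x + N) /\ s2 = k1 * y /\
  3 + (s1 * s1 + s2 * s2) - (m1 * m1 + m2 * m2) = 2 * k1 * (x + N).
Proof.
  intros H N.
  assert (Re : forall t, (m1 - (k1 * x - k2 * y))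
     + (-2 * s1 + (k1 * (2 * x + N) - 2 * k2 * y)) * t
     + ((3 + (s1 * s1 + s2 * s2) - (m1 * m1 + m2 * m2)) - k1 * (2 * x + 2 * N)) * (t * t)
     + (-2 * s1 + (k1 * (N + 2 * x) + 2 * k2 * y)) * (t * t * t)
     + (m1 - (k1 * x + k2 * y)) * (t * t * t * t) = 0).
  { intros t. pose proof (f_equal fst (H t)) as E.
    unfold N. cbv [wron_sm crit_poly] in E. cx. lra. }
  assert (Im : forall t, (m2 - (k1 * y + k2 * x))
     + (-2 * s2 + (k2 * (2 * x + N) + 2 * k1 * y)) * t
     + (0 - k2 * (2 * x + 2 * N)) * (t * t)
     + (2 * s2 + (k2 * (N + 2 * x) - 2 * k1 * y)) * (t * t * t)
     + (-m2 - (k2 * x - k1 * y)) * (t * t * t * t) = 0).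
  { intros t. pose proof (f_equal snd (H t)) as E.
    unfold N. cbv [wron_sm crit_poly] in E. cx. lra. }
  apply quartic_zero in Re, Im.
  assert (k2 = 0).
  { destruct Im as [_ [_ [E _]]]. assert (2 * x + 2 * N > 0) by (unfold N; nra). nra. }
  subst k2. lra.
Qed.

(** If the Wronskian is a nonzero multiple of [crit_poly w], then p + q and
    p q are [sum_of w] and [prod_of w].  Comparing coefficients leaves two
    branches; the second one forces p = 1 or q = 1. *)
Lemma crit_poly_params (p q w K : Cx) : p <> C1 -> q <> C1 -> K <> C0 ->
  (forall z, Bwron p q z = Cmul K (crit_poly w z)) ->
  side w <> 0 /\ Cadd p q = sum_of w /\ Cmul p q = prod_of w.
Proof.
  intros Hp1 Hq1 HK HW.
  destruct w as [x y], K as [k1 k2], p as [p1 p2], q as [q1 q2].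
  assert (HW' : forall t, wron_sm (p1 + q1, p2 + q2) (p1 * q1 - p2 * q2, p1 * q2 + p2 * q1) (t, 0)
                         = Cmul (k1, k2) (crit_poly (x, y) (t, 0))).
  { intros t. rewrite <- HW, Bwron_sm. reflexivity. }
  destruct (crit_coeffs _ _ _ _ _ _ _ _ HW') as [E0 [E1 [E2 [E3 [E4 E5]]]]].
  set (N := 1 + (x * x + y * y)) in *. subst k2.
  assert (Branches : (side (x, y) * k1 - 6) * (N * k1 - 2) = 0).
  { unfold side, Cnorm2, N in *; simpl in *. rewrite E1, E2, E4 in E5.
    replace (p1 + q1) with (k1 * (2 * x + (1 + (x * x + y * y))) / 2) in E5 by lra. nra. }
  destruct (Rmult_integral _ _ Branches) as [B|B].
  - assert (HD : side (x, y) <> 0) by (intros D; rewrite D in B; lra).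
    assert (Hk : k1 = 6 / side (x, y)) by (replace 6 with (side (x, y) * k1) by lra; field; auto).
    split; auto. subst k1. unfold sum_of, prod_of; cx.
    replace (1 + (x * x + y * y)) with N by reflexivity.
    split; f_equal; lra.
  - exfalso.
    assert (Z : Cmul (Csub C1 (p1, p2)) (Csub C1 (q1, q2)) = C0).
    { cx. f_equal; nra. }
    destruct (Cmul_eq0 _ _ Z) as [Z1|Z1]; [apply Hp1|apply Hq1]; cx;
      injection Z1; intros; f_equal; lra.
Qed.

Lemma is_Phi_params (p q : Cx) (c : sphere) : p <> C1 -> q <> C1 -> is_Phi p q c ->
  side (refl_in c) <> 0 /\ Cadd p q = sum_of (refl_in c) /\ Cmul p q = prod_of (refl_in c).
Proof.
  intros Hp Hq [Ho Hcd].
  destruct (crit_divisor_poly p q c Ho Hcd) as [K [HK HW]].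
  exact (crit_poly_params p q _ K Hp Hq HK HW).
Qed.

Lemma params_is_Phi (p q w : Cx) : Cnorm2 w < 1 -> side w <> 0 ->
  Cadd p q = sum_of w -> Cmul p q = prod_of w -> is_Phi p q (refl_out w).
Proof.
  intros Hw HD Hs Hm. split; [apply refl_out_outside; auto|].
  rewrite reflect_refl_in, refl_in_out. split; [reflexivity|].
  set (k := (6 / side w, 0)).
  assert (HK : forall z, Bwron p q z = Cmul k (crit_poly w z))
    by (intros z; rewrite Bwron_sm, Hs, Hm; apply wron_sm_crit; auto).
  assert (Hk : k <> C0).
  { unfold k; intros E. injection E. intros E1. unfold Rdiv in E1.
    apply Rmult_integral in E1. destruct E1 as [E1|E1]; [lra|].
    apply (Rinv_neq_0_compat (side w)); auto. }
  unfold refl_out. destruct (Req_EM_T (Cnorm2 w) 0) as [e|e].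
  - apply Cnorm2_eq0 in e. subst w. exists (Copp k). split.
    + intros E. apply Hk. destruct k; cx. injection E; intros; f_equal; lra.
    + intros z. rewrite HK. change (fold_right _ _ _) with (divisor_prod z [Some C1; Some C1; None; Some C0]).
      rewrite divisor_prod_infty. destruct k; cx. f_equal; f_equal; ring.
  - set (z0 := Cinv (Cconj w)).
    assert (Hz0 : Cnorm2 z0 <> 0)
      by (unfold z0; rewrite Cnorm2_inv_conj by auto; apply Rinv_neq_0_compat; auto).
    exists (Cmul k (Cconj w)). split.
    + intros E. destruct (Cmul_eq0 _ _ E) as [E1|E1]; auto.
      apply e. destruct w; cx. injection E1; intros; nra.
    + intros z. rewrite HK.
      change (fold_right _ _ _) with (divisor_prod z [Some C1; Some C1; Some z0; Some w]).
      replace (Some w) with (Some (Cinv (Cconj z0))) by (unfold z0; rewrite inv_conj_invol; auto).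
      rewrite divisor_prod_fin by auto.
      unfold z0. rewrite (inv_conj_invol w) by auto. f_equal.
      rewrite Cinv_conj_eq. destruct w as [x y], k. cx. f_equal; field; auto.
Qed.

(** For s = p + q and m = p q,
    |s^2 - 4m|^2 - (2 + 2|m|^2 - |s|^2)^2 = -4 (|p|^2 - 1)(|q|^2 - 1) |1 - p conj(q)|^2,
    while for (s, m) = ([sum_of w], [prod_of w]) it equals 32 |1 - w|^6 / side(w)^3.
    Comparing signs: p and q are on opposite sides of the unit circle exactly
    when side(w) > 0. *)
Definition disc_defect (s m : Cx) : R :=
  Cnorm2 (Csub (Cmul s s) (Cmul (Cof 4) m)) - (2 + 2 * Cnorm2 m - Cnorm2 s) ^ 2.

Lemma disc_defect_roots (p q : Cx) :
  disc_defect (Cadd p q) (Cmul p q)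
  = -4 * ((Cnorm2 p - 1) * (Cnorm2 q - 1)) * Cnorm2 (Csub C1 (Cmul p (Cconj q))).
Proof. destruct p, q. unfold disc_defect; cx. ring. Qed.

Lemma disc_defect_crit (w : Cx) : side w <> 0 ->
  disc_defect (sum_of w) (prod_of w) * side w ^ 4 = 32 * side w * Cnorm2 (Csub C1 w) ^ 3.
Proof. intros H. destruct w. unfold disc_defect, sum_of, prod_of, side in *; cx. field. auto. Qed.

Lemma disc_sign (p q w : Cx) : Cnorm2 w < 1 -> side w <> 0 ->
  Cadd p q = sum_of w -> Cmul p q = prod_of w ->
  (Cnorm2 p - 1) * (Cnorm2 q - 1) * side w < 0.
Proof.
  intros Hw HD Hs Hm.
  pose proof (disc_defect_crit w HD) as G. rewrite <- Hs, <- Hm, disc_defect_roots in G.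
  set (E := (Cnorm2 p - 1) * (Cnorm2 q - 1)) in *.
  set (F := Cnorm2 (Csub C1 (Cmul p (Cconj q)))) in *.
  set (L := Cnorm2 (Csub C1 w)) in *. set (D := side w) in *.
  assert (HF : 0 <= F) by apply Cnorm2_nonneg.
  assert (HL : L > 0).
  { unfold L. destruct w as [x y]; cx. nra. }
  assert (HL3 : L ^ 3 > 0) by (apply pow_lt; auto).
  assert (HD2 : D * D > 0) by (apply Rsqr_pos_lt in HD; unfold Rsqr in HD; auto).
  assert (HX : (E * D) * (F * D ^ 4) = -8 * (D * D) * L ^ 3).
  { replace (E * D * (F * D ^ 4)) with ((-4 * E * F * D ^ 4) * D * / (-4)) by field.
    rewrite G. field. }
  assert (0 <= F * D ^ 4)
    by (apply Rmult_le_pos; auto; replace (D ^ 4) with ((D * D) * (D * D)) by ring; nra).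
  nra.
Qed.

Lemma side_pos (p q w : Cx) : Cnorm2 p > 1 -> Cnorm2 q < 1 -> Cnorm2 w < 1 -> side w <> 0 ->
  Cadd p q = sum_of w -> Cmul p q = prod_of w -> side w > 0.
Proof.
  intros Hp Hq Hw HD Hs Hm. pose proof (disc_sign p q w Hw HD Hs Hm) as S.
  assert (Hpq : (Cnorm2 p - 1) * (Cnorm2 q - 1) < 0) by (apply Rmult_pos_neg; lra).
  destruct (Rle_lt_dec (side w) 0) as [Hle|]; [|lra].
  exfalso. revert S Hpq Hle. generalize ((Cnorm2 p - 1) * (Cnorm2 q - 1)) (side w). intros. nra.
Qed.

Lemma Csqrt_ex (z : Cx) : exists d, Cmul d d = z.
Proof.
  destruct z as [a b].
  set (r := sqrt (a * a + b * b)).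
  assert (Hr : r * r = a * a + b * b) by (apply sqrt_sqrt; nra).
  assert (Hr0 : 0 <= r) by apply sqrt_pos.
  assert (Ha : Rabs a <= r)
    by (unfold r; rewrite <- sqrt_Rsqr_abs; apply sqrt_le_1_alt; unfold Rsqr; nra).
  assert (Ha' : - r <= a <= r)
    by (pose proof (Rle_abs a); pose proof (Rle_abs (- a)); rewrite Rabs_Ropp in *; split; lra).
  set (d1 := sqrt ((r + a) / 2)). set (d2 := sqrt ((r - a) / 2)).
  assert (H1 : d1 * d1 = (r + a) / 2) by (apply sqrt_sqrt; lra).
  assert (H2 : d2 * d2 = (r - a) / 2) by (apply sqrt_sqrt; lra).
  assert (H12 : d1 * d2 = Rabs b / 2).
  { unfold d1, d2. rewrite <- sqrt_mult_alt by lra.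
    replace ((r + a) / 2 * ((r - a) / 2)) with ((b / 2) * (b / 2)) by (field_simplify; nra).
    replace (Rabs b / 2) with (Rabs (b / 2))
      by (unfold Rdiv; rewrite Rabs_mult, (Rabs_right (/ 2)); lra).
    rewrite <- sqrt_Rsqr_abs. reflexivity. }
  destruct (Rle_dec 0 b) as [Hb|Hb].
  - exists (d1, d2). cx. rewrite Rabs_right in H12 by lra. f_equal; nra.
  - exists (d1, - d2). cx. rewrite Rabs_left in H12 by lra. f_equal; nra.
Qed.

(** Every w in the disk with side(w) > 0 comes from a pair |p| > 1 > |q|:
    take the roots of X^2 - [sum_of w] X + [prod_of w]. *)
Lemma params_roots (w : Cx) : Cnorm2 w < 1 -> side w > 0 ->
  exists p q, Cnorm2 p > 1 /\ Cnorm2 q < 1 /\ Cadd p q = sum_of w /\ Cmul p q = prod_of w.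
Proof.
  intros Hw HD.
  destruct (sum_of w) as [s1 s2] eqn:Es. destruct (prod_of w) as [m1 m2] eqn:Em.
  destruct (Csqrt_ex (s1 * s1 - s2 * s2 - 4 * m1, 2 * s1 * s2 - 4 * m2)) as [[d1 d2] Hd].
  cbv [Cmul fst snd] in Hd. injection Hd; intros Hd2 Hd1.
  set (p := ((s1 + d1) / 2, (s2 + d2) / 2)). set (q := ((s1 - d1) / 2, (s2 - d2) / 2)).
  assert (Hs : Cadd p q = sum_of w) by (rewrite Es; unfold p, q; cx; f_equal; field).
  assert (Hm : Cmul p q = prod_of w) by (rewrite Em; unfold p, q; cx; f_equal; nra).
  pose proof (disc_sign p q w Hw ltac:(lra) Hs Hm) as S.
  assert (Hpq : (Cnorm2 p - 1) * (Cnorm2 q - 1) < 0).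
  { revert S HD. generalize ((Cnorm2 p - 1) * (Cnorm2 q - 1)) (side w). intros. nra. }
  destruct (Rlt_dec 1 (Cnorm2 p)) as [Hp|Hp].
  - exists p, q. assert (Cnorm2 q < 1).
    { revert Hpq Hp. generalize (Cnorm2 p) (Cnorm2 q). intros. nra. }
    repeat split; auto; congruence.
  - assert (Cnorm2 p < 1 /\ Cnorm2 q > 1).
    { assert (Hp1 : Cnorm2 p <> 1) by (intros E; rewrite E in Hpq; lra).
      revert Hpq Hp Hp1. generalize (Cnorm2 p) (Cnorm2 q). intros. split; nra. }
    exists q, p. repeat split; try tauto.
    + rewrite <- Es, <- Hs. unfold p, q; cx; f_equal; ring.
    + rewrite <- Em, <- Hm. unfold p, q; cx; f_equal; ring.
Qed.

(** A pair |p| > 1 > |q| depends Lipschitz-continuously on (p + q, p q):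
    (p' - p)(p' - q) and (q' - q)(q' - p) are combinations of the changes
    of the symmetric functions, and |p' - q| >= 1 - |q|, |q' - p| >= |p| - 1. *)
Lemma roots_stable (p q p' q' : Cx) :
  Cnorm p > 1 -> Cnorm q < 1 -> Cnorm p' > 1 -> Cnorm q' < 1 ->
  Cnorm (Csub p' p) * (1 - Cnorm q)
    <= Cnorm (Csub (Cadd p' q') (Cadd p q)) * Cnorm p' + Cnorm (Csub (Cmul p' q') (Cmul p q)) /\
  Cnorm (Csub q' q) * (Cnorm p - 1)
    <= Cnorm (Csub (Cadd p' q') (Cadd p q)) + Cnorm (Csub (Cmul p' q') (Cmul p q)).
Proof.
  intros Hp Hq Hp' Hq'.
  set (ds := Csub (Cadd p' q') (Cadd p q)). set (dm := Csub (Cmul p' q') (Cmul p q)).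
  assert (I1 : Cmul (Csub p' p) (Csub p' q) = Csub (Cmul ds p') dm)
    by (unfold ds, dm; destruct p, q, p', q'; cx; f_equal; ring).
  assert (I2 : Cmul (Csub q' q) (Csub q' p) = Csub (Cmul ds q') dm)
    by (unfold ds, dm; destruct p, q, p', q'; cx; f_equal; ring).
  pose proof (Cnorm_nonneg (Csub p' p)); pose proof (Cnorm_nonneg (Csub q' q)).
  pose proof (Cnorm_nonneg ds); pose proof (Cnorm_nonneg dm).
  pose proof (Cnorm_nonneg q); pose proof (Cnorm_nonneg p'); pose proof (Cnorm_nonneg q').
  split.
  - pose proof (f_equal Cnorm I1) as J. rewrite Cnorm_mul in J.
    pose proof (Cnorm_sub_triang (Cmul ds p') dm) as T. rewrite Cnorm_mul in T.
    pose proof (Cnorm_rev_triang p' q).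
    assert (Cnorm (Csub p' p) * (1 - Cnorm q) <= Cnorm (Csub p' p) * Cnorm (Csub p' q))
      by (apply Rmult_le_compat_l; lra).
    lra.
  - pose proof (f_equal Cnorm I2) as J. rewrite Cnorm_mul in J.
    pose proof (Cnorm_sub_triang (Cmul ds q') dm) as T. rewrite Cnorm_mul in T.
    pose proof (Cnorm_rev_triang p q') as R. rewrite Cnorm_sub_sym in R.
    assert (Cnorm (Csub q' q) * (Cnorm p - 1) <= Cnorm (Csub q' q) * Cnorm (Csub q' p))
      by (apply Rmult_le_compat_l; lra).
    assert (Cnorm ds * Cnorm q' <= Cnorm ds) by nra.
    lra.
Qed.

Lemma roots_unique (p q p' q' : Cx) :
  Cnorm p > 1 -> Cnorm q < 1 -> Cnorm p' > 1 -> Cnorm q' < 1 ->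
  Cadd p q = Cadd p' q' -> Cmul p q = Cmul p' q' -> p = p' /\ q = q'.
Proof.
  intros Hp Hq Hp' Hq' Hs Hm.
  destruct (roots_stable p q p' q' Hp Hq Hp' Hq') as [B1 B2].
  rewrite Hs, Hm, !Cnorm_sub_diag in B1, B2.
  pose proof (Cnorm_nonneg (Csub p' p)); pose proof (Cnorm_nonneg (Csub q' q)).
  split; symmetry; apply Cnorm_sub_eq0; nra.
Qed.

Lemma pdist_fst (p q p' q' : Cx) : Cnorm (Csub p' p) <= pdist p q p' q'.
Proof. unfold pdist. rewrite Cnorm_sub_sym. apply Rmax_l. Qed.

Lemma pdist_snd (p q p' q' : Cx) : Cnorm (Csub q' q) <= pdist p q p' q'.
Proof. unfold pdist. rewrite Cnorm_sub_sym. apply Rmax_r. Qed.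

Lemma sum_prod_lip (p q p' q' : Cx) : Cnorm q' < 1 ->
  Cnorm (Csub (Cadd p' q') (Cadd p q)) + Cnorm (Csub (Cmul p' q') (Cmul p q))
    <= (Cnorm p + 3) * pdist p q p' q'.
Proof.
  intros Hq'. pose proof (pdist_fst p q p' q'); pose proof (pdist_snd p q p' q').
  replace (Csub (Cadd p' q') (Cadd p q)) with (Cadd (Csub p' p) (Csub q' q))
    by (destruct p, q, p', q'; cx; f_equal; ring).
  replace (Csub (Cmul p' q') (Cmul p q)) with (Cadd (Cmul (Csub p' p) q') (Cmul p (Csub q' q)))
    by (destruct p, q, p', q'; cx; f_equal; ring).
  pose proof (Cnorm_triang (Csub p' p) (Csub q' q)).
  pose proof (Cnorm_triang (Cmul (Csub p' p) q') (Cmul p (Csub q' q))) as T.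
  rewrite !Cnorm_mul in T.
  pose proof (Cnorm_nonneg (Csub p' p)); pose proof (Cnorm_nonneg p); pose proof (Cnorm_nonneg q').
  assert (Cnorm (Csub p' p) * Cnorm q' <= pdist p q p' q') by nra.
  assert (Cnorm p * Cnorm (Csub q' q) <= Cnorm p * pdist p q p' q')
    by (apply Rmult_le_compat_l; auto).
  nra.
Qed.

(** The point w is recovered from (p + q, p q) through the Klein-model map
    w |-> 2w / (1 + |w|^2) of the unit disk, which is a rational function of
    p + q and p q and has a locally Lipschitz inverse. *)
Definition klein (w : Cx) : Cx :=
  (2 * fst w / (1 + Cnorm2 w), 2 * snd w / (1 + Cnorm2 w)).
Definition klein_of_params (s m : Cx) : Cx :=
  (fst m / (fst s - fst m), snd m / (fst s - fst m)).

Lemma params_gap (w : Cx) : side w <> 0 ->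
  fst (sum_of w) - fst (prod_of w) = 3 * (1 + Cnorm2 w) / side w.
Proof. intros H. destruct w. unfold sum_of, prod_of, side in *; cx. field. auto. Qed.

Lemma params_gap_pos (w : Cx) : side w > 0 -> fst (sum_of w) - fst (prod_of w) > 0.
Proof.
  intros HD. rewrite params_gap by lra. pose proof (Cnorm2_nonneg w).
  apply Rdiv_lt_0_compat; lra.
Qed.

Lemma klein_params (w : Cx) : side w <> 0 -> klein w = klein_of_params (sum_of w) (prod_of w).
Proof.
  intros H. unfold klein_of_params. rewrite params_gap by auto.
  unfold klein, prod_of. destruct w as [x y]. unfold side in *; cx.
  f_equal; field; split; auto; nra.
Qed.

(** w - w' - w w' conj(w - w') = (1 + |w|^2)(1 + |w'|^2)/2 (klein w - klein w'),
    whence a reverse Lipschitz bound for [klein] near any point of the disk. *)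
Lemma klein_expand (w w' : Cx) : Cnorm2 w < 1 -> Cnorm2 w' < 1 ->
  Cnorm (Csub w w') * (1 - Cnorm w) <= 2 * Cnorm (Csub (klein w) (klein w')).
Proof.
  intros Hw Hw'.
  set (d := Csub w w'). set (dk := Csub (klein w) (klein w')).
  assert (Id : Csub d (Cmul (Cmul w w') (Cconj d))
               = Cmul ((1 + Cnorm2 w) * (1 + Cnorm2 w') / 2, 0) dk).
  { unfold d, dk, klein. destruct w as [a b], w' as [c e]. cx. f_equal; field; split; nra. }
  pose proof (Cnorm_rev_triang d (Cmul (Cmul w w') (Cconj d))) as T.
  rewrite Id, Cnorm_real, !Cnorm_mul, Cnorm_conj in T.
  pose proof (Cnorm2_nonneg w); pose proof (Cnorm2_nonneg w').
  rewrite Rabs_right in T by (apply Rle_ge, Rmult_le_pos; [nra|lra]).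
  pose proof (Cnorm_nonneg w); pose proof (Cnorm_nonneg w'); pose proof (Cnorm_nonneg d).
  pose proof (Cnorm_nonneg dk).
  apply Cnorm_lt1 in Hw, Hw'.
  assert (Cnorm w * Cnorm w' * Cnorm d <= Cnorm w * Cnorm d).
  { rewrite (Rmult_comm (Cnorm w) (Cnorm w')), Rmult_assoc.
    rewrite <- (Rmult_1_l (Cnorm w * Cnorm d)) at 2.
    apply Rmult_le_compat_r; [apply Rmult_le_pos|]; lra. }
  assert ((1 + Cnorm2 w) * (1 + Cnorm2 w') / 2 * Cnorm dk <= 2 * Cnorm dk).
  { apply Rmult_le_compat_r; auto. apply Cnorm_lt1 in Hw; apply Cnorm_lt1 in Hw'. nra. }
  lra.
Qed.

Lemma params_inj (w w' : Cx) : Cnorm2 w < 1 -> Cnorm2 w' < 1 -> side w <> 0 -> side w' <> 0 ->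
  sum_of w = sum_of w' -> prod_of w = prod_of w' -> w = w'.
Proof.
  intros Hw Hw' D D' Hs Hm.
  assert (E : klein w = klein w') by (rewrite !klein_params, Hs, Hm by auto; reflexivity).
  pose proof (klein_expand w w' Hw Hw') as K. rewrite E, Cnorm_sub_diag in K.
  pose proof (Cnorm_nonneg (Csub w w')).
  assert (Cnorm w < 1) by (apply Cnorm_lt1; auto).
  apply Cnorm_sub_eq0. nra.
Qed.

Lemma div_lip (a b a' b' A B h : R) : b > 0 -> 0 <= A -> 0 <= B ->
  Rabs (a' - a) <= A * h -> Rabs (b' - b) <= B * h -> Rabs (b' - b) <= b / 2 ->
  Rabs (a' / b' - a / b) <= 2 * (b * A + Rabs a * B) / (b * b) * h.
Proof.
  intros Hb HA HB Ha Hb' Hbb. apply Rabs_le_inv in Hbb.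
  replace (a' / b' - a / b) with (((a' - a) * b - a * (b' - b)) / (b * b')) by (field; lra).
  assert (Hn : Rabs ((a' - a) * b - a * (b' - b)) <= (b * A + Rabs a * B) * h).
  { unfold Rminus at 1. eapply Rle_trans; [apply Rabs_triang|].
    rewrite Rabs_Ropp, !Rabs_mult, (Rabs_right b) by lra.
    pose proof (Rabs_pos a).
    assert (Rabs (a' - a) * b <= A * h * b) by (apply Rmult_le_compat_r; lra).
    assert (Rabs a * Rabs (b' - b) <= Rabs a * (B * h)) by (apply Rmult_le_compat_l; lra).
    nra. }
  unfold Rdiv. rewrite Rabs_mult, (Rabs_right (/ (b * b'))) by (apply Rle_ge, Rlt_le, Rinv_0_lt_compat; nra).
  assert (0 <= (b * A + Rabs a * B) * h).
  { pose proof (Rabs_pos (a' - a)); pose proof (Rabs_pos (b' - b)); pose proof (Rabs_pos a).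
    replace ((b * A + Rabs a * B) * h) with (b * (A * h) + Rabs a * (B * h)) by ring.
    apply Rplus_le_le_0_compat; apply Rmult_le_pos; lra. }
  apply (Rle_trans _ ((b * A + Rabs a * B) * h * / (b * b'))).
  { apply Rmult_le_compat_r; [apply Rlt_le, Rinv_0_lt_compat; nra|lra]. }
  replace (2 * (b * A + Rabs a * B) * / (b * b) * h)
    with ((b * A + Rabs a * B) * h * / (b * b / 2)) by (field; lra).
  apply Rmult_le_compat_l; auto. apply Rinv_le_contravar; nra.
Qed.

Lemma klein_of_params_lip (s m s' m' : Cx) :
  let g := fst s - fst m in
  let h := Cnorm (Csub s' s) + Cnorm (Csub m' m) in
  g > 0 -> h <= g / 2 ->
  Cnorm (Csub (klein_of_params s' m') (klein_of_params s m)) <= 4 * (g + Cnorm m) / (g * g) * h.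
Proof.
  intros g h Hg Hh.
  pose proof (Cnorm_fst (Csub s' s)); pose proof (Cnorm_fst (Csub m' m));
    pose proof (Cnorm_snd (Csub m' m)).
  pose proof (Cnorm_nonneg (Csub s' s)); pose proof (Cnorm_nonneg (Csub m' m)).
  pose proof (Cnorm_fst m) as Fm; pose proof (Cnorm_snd m) as Sm.
  assert (Hgap : Rabs ((fst s' - fst m') - g) <= 1 * h).
  { unfold g, h. destruct s as [s1 s2], m as [m1 m2], s' as [s1' s2'], m' as [m1' m2'].
    cbv [Csub Cadd Copp fst snd] in *.
    replace (s1' - m1' - (s1 - m1)) with ((s1' + - s1) - (m1' + - m1)) by ring.
    eapply Rle_trans; [apply Rabs_triang|]. rewrite Rabs_Ropp. lra. }
  assert (Hfst : Rabs (fst m' - fst m) <= 1 * h)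
    by (change (fst m' - fst m) with (fst (Csub m' m)); unfold h; lra).
  assert (Hsnd : Rabs (snd m' - snd m) <= 1 * h)
    by (change (snd m' - snd m) with (snd (Csub m' m)); unfold h; lra).
  assert (Hgap' : Rabs ((fst s' - fst m') - g) <= g / 2) by lra.
  pose proof (div_lip _ _ _ _ 1 1 h Hg ltac:(lra) ltac:(lra) Hfst Hgap Hgap') as D1.
  pose proof (div_lip _ _ _ _ 1 1 h Hg ltac:(lra) ltac:(lra) Hsnd Hgap Hgap') as D2.
  assert (Hh0 : 0 <= h) by (unfold h; lra).
  assert (B1 : 2 * (g * 1 + Rabs (fst m) * 1) / (g * g) * h <= 2 * (g + Cnorm m) / (g * g) * h).
  { apply Rmult_le_compat_r; auto. unfold Rdiv. apply Rmult_le_compat_r.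
    - apply Rlt_le, Rinv_0_lt_compat; nra.
    - lra. }
  assert (B2 : 2 * (g * 1 + Rabs (snd m) * 1) / (g * g) * h <= 2 * (g + Cnorm m) / (g * g) * h).
  { apply Rmult_le_compat_r; auto. unfold Rdiv. apply Rmult_le_compat_r.
    - apply Rlt_le, Rinv_0_lt_compat; nra.
    - lra. }
  eapply Rle_trans; [apply Cnorm_le_sum|]. unfold klein_of_params. fold g.
  cbv [Csub Cadd Copp fst snd] in *. unfold Rminus in *.
  replace (4 * (g + Cnorm m) / (g * g) * h)
    with (2 * (g + Cnorm m) / (g * g) * h + 2 * (g + Cnorm m) / (g * g) * h) by (field; lra).
  lra.
Qed.

Lemma side_lip (a b : Cx) : Cnorm2 a < 1 -> Cnorm2 b < 1 ->
  Rabs (side a - side b) <= 8 * Cnorm (Csub a b).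
Proof.
  intros Ha Hb.
  pose proof (Cnorm_fst (Csub a b)) as H1; pose proof (Cnorm_snd (Csub a b)) as H2.
  set (h := Cnorm (Csub a b)) in *. destruct a as [a1 a2], b as [b1 b2].
  cbv [Csub Cadd Copp fst snd] in H1, H2. unfold side; cx.
  replace (1 + (a1 * a1 + a2 * a2) + 4 * a1 - (1 + (b1 * b1 + b2 * b2) + 4 * b1)) with
    ((a1 + - b1) * (a1 + b1) + (a2 + - b2) * (a2 + b2) + 4 * (a1 + - b1)) by ring.
  assert (-1 < a1 < 1 /\ -1 < a2 < 1 /\ -1 < b1 < 1 /\ -1 < b2 < 1) by (repeat split; nra).
  assert (Rabs (a1 + b1) <= 2) by (apply Rabs_le; lra).
  assert (Rabs (a2 + b2) <= 2) by (apply Rabs_le; lra).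
  eapply Rle_trans; [apply Rabs_triang|].
  eapply Rle_trans; [apply Rplus_le_compat_r, Rabs_triang|].
  rewrite !Rabs_mult, (Rabs_right 4) by lra.
  pose proof (Rabs_pos (a1 + - b1)); pose proof (Rabs_pos (a2 + - b2)). nra.
Qed.

Lemma params_lip (w : Cx) : Cnorm2 w < 1 -> side w > 0 ->
  exists L, 0 <= L /\ forall w', Cnorm2 w' < 1 -> Cnorm (Csub w' w) <= side w / 16 ->
    Cnorm (Csub (sum_of w') (sum_of w)) + Cnorm (Csub (prod_of w') (prod_of w))
      <= L * Cnorm (Csub w' w).
Proof.
  intros Hw HD. set (D := side w) in *.
  set (n := 3 * (2 * fst w + (1 + Cnorm2 w))).
  set (K := fun A a => 2 * (D * A + Rabs a * 8) / (D * D)).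
  assert (HK : forall A a, 0 <= A -> 0 <= K A a).
  { intros A a HA. unfold K. pose proof (Rabs_pos a).
    apply Rmult_le_pos; [nra|apply Rlt_le, Rinv_0_lt_compat; nra]. }
  exists (K 30 n + K 6 (6 * snd w) + K 6 (6 * fst w) + K 6 (6 * snd w)).
  split; [pose proof (HK 30 n); pose proof (HK 6 (6 * snd w)); pose proof (HK 6 (6 * fst w)); lra|].
  intros w' Hw' Hh. set (h := Cnorm (Csub w' w)) in *.
  pose proof (side_lip w' w Hw' Hw) as Hs. fold h D in Hs.
  pose proof (Cnorm_fst (Csub w' w)) as F; pose proof (Cnorm_snd (Csub w' w)) as S.
  fold h in F, S.
  assert (Hs' : Rabs (side w' - D) <= D / 2) by lra.
  assert (Hs8 : Rabs (side w' - D) <= 8 * h) by lra.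
  assert (En : Rabs (3 * (2 * fst w' + (1 + Cnorm2 w')) - n) <= 30 * h).
  { replace (3 * (2 * fst w' + (1 + Cnorm2 w')) - n) with (3 * (side w' - D) - 6 * (fst w' - fst w))
      by (unfold n, D, side; ring).
    eapply Rle_trans; [apply Rabs_triang|]. rewrite Rabs_Ropp, !Rabs_mult, (Rabs_right 3), (Rabs_right 6) by lra.
    change (fst w' - fst w) with (fst (Csub w' w)). lra. }
  assert (Ex : Rabs (6 * fst w' - 6 * fst w) <= 6 * h).
  { replace (6 * fst w' - 6 * fst w) with (6 * fst (Csub w' w)) by (cbv [Csub Cadd Copp fst]; ring).
    rewrite Rabs_mult, (Rabs_right 6) by lra. lra. }
  assert (Ey : Rabs (6 * snd w' - 6 * snd w) <= 6 * h).
  { replace (6 * snd w' - 6 * snd w) with (6 * snd (Csub w' w)) by (cbv [Csub Cadd Copp snd]; ring).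
    rewrite Rabs_mult, (Rabs_right 6) by lra. lra. }
  pose proof (div_lip _ _ _ _ 30 8 h HD ltac:(lra) ltac:(lra) En Hs8 Hs') as D1.
  pose proof (div_lip _ _ _ _ 6 8 h HD ltac:(lra) ltac:(lra) Ey Hs8 Hs') as D2.
  pose proof (div_lip _ _ _ _ 6 8 h HD ltac:(lra) ltac:(lra) Ex Hs8 Hs') as D3.
  eapply Rle_trans; [apply Rplus_le_compat; apply Cnorm_le_sum|].
  unfold sum_of, prod_of. fold D n. cbn [Csub Cadd Copp fst snd].
  unfold K, Rminus in *. lra.
Qed.

Lemma roots_lip (p q : Cx) : Cnorm p > 1 -> Cnorm q < 1 ->
  exists M, 0 <= M /\ forall p' q', Cnorm p' > 1 -> Cnorm q' < 1 ->
    Cnorm (Csub (Cadd p' q') (Cadd p q)) <= 1 ->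
    pdist p q p' q'
      <= M * (Cnorm (Csub (Cadd p' q') (Cadd p q)) + Cnorm (Csub (Cmul p' q') (Cmul p q))).
Proof.
  intros Hp Hq.
  set (K := Cnorm (Cadd p q)). pose proof (Cnorm_nonneg (Cadd p q)) as HK. fold K in HK.
  set (M1 := (K + 3) / (1 - Cnorm q)). set (M2 := 1 / (Cnorm p - 1)).
  assert (HM1 : 0 < M1) by (apply Rdiv_lt_0_compat; lra).
  assert (HM2 : 0 < M2) by (apply Rdiv_lt_0_compat; lra).
  exists (M1 + M2). split; [lra|].
  intros p' q' Hp' Hq' Hds.
  destruct (roots_stable p q p' q' Hp Hq Hp' Hq') as [B1 B2].
  set (ds := Cnorm (Csub (Cadd p' q') (Cadd p q))) in *.
  set (dm := Cnorm (Csub (Cmul p' q') (Cmul p q))) in *.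
  assert (Hds0 : 0 <= ds) by apply Cnorm_nonneg.
  assert (Hdm0 : 0 <= dm) by apply Cnorm_nonneg.
  assert (Hpp : Cnorm p' <= K + 2).
  { replace p' with (Csub (Cadd (Csub (Cadd p' q') (Cadd p q)) (Cadd p q)) q') at 1
      by (destruct p, q, p', q'; cx; f_equal; ring).
    pose proof (Cnorm_sub_triang (Cadd (Csub (Cadd p' q') (Cadd p q)) (Cadd p q)) q').
    pose proof (Cnorm_triang (Csub (Cadd p' q') (Cadd p q)) (Cadd p q)) as T. fold ds K in T. lra. }
  assert (P1 : Cnorm (Csub p' p) <= M1 * (ds + dm)).
  { unfold M1. apply (Rmult_le_reg_r (1 - Cnorm q)); [lra|].
    replace ((K + 3) / (1 - Cnorm q) * (ds + dm) * (1 - Cnorm q)) with ((K + 3) * (ds + dm))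
      by (field; lra).
    assert (ds * Cnorm p' <= ds * (K + 2)) by (apply Rmult_le_compat_l; lra). nra. }
  assert (P2 : Cnorm (Csub q' q) <= M2 * (ds + dm)).
  { unfold M2. apply (Rmult_le_reg_r (Cnorm p - 1)); [lra|].
    replace (1 / (Cnorm p - 1) * (ds + dm) * (Cnorm p - 1)) with (ds + dm) by (field; lra).
    lra. }
  unfold pdist. rewrite (Cnorm_sub_sym p), (Cnorm_sub_sym q).
  apply Rmax_lub; nra.
Qed.

Lemma local_lip_cont {A : Type} (P : A -> Prop) (dx dy : A -> R) (d0 L : R) :
  d0 > 0 -> 0 <= L -> (forall a, P a -> dx a < d0 -> dy a <= L * dx a) ->
  forall eps, eps > 0 -> exists d, d > 0 /\ forall a, P a -> dx a < d -> dy a < eps.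
Proof.
  intros Hd0 HL Hlip eps Heps.
  exists (Rmin d0 (eps / (L + 1))). split.
  { apply Rmin_glb_lt; [lra|]. apply Rdiv_lt_0_compat; lra. }
  intros a Pa Ha.
  pose proof (Rmin_l d0 (eps / (L + 1))); pose proof (Rmin_r d0 (eps / (L + 1))).
  assert (Hdy : dy a <= L * (eps / (L + 1))).
  { eapply Rle_trans; [apply Hlip; auto; lra|]. apply Rmult_le_compat_l; lra. }
  assert (L * (eps / (L + 1)) < eps).
  { apply (Rmult_lt_reg_r (L + 1)); [lra|].
    replace (L * (eps / (L + 1)) * (L + 1)) with (L * eps) by (field; lra). nra. }
  lra.
Qed.

(** The region U, described through the reflected point: c lies in U exactly
    when side(1/conj c) > 0 (proved below: [Ureg_sub_U], [U_sub_Ureg]). *)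
Definition Ureg (x : sphere) : Prop := outside_disk x /\ side (refl_in x) > 0.

Lemma side_refl_in (z : Cx) : Cnorm2 z <> 0 ->
  side (refl_in (Some z)) = (Cnorm2 z + 1 + 4 * fst z) / Cnorm2 z.
Proof. intros H. unfold refl_in. rewrite Cinv_conj_eq. destruct z; unfold side; cx. field. auto. Qed.

Lemma gamma_eq (z : Cx) : gamma z -> Cnorm2 z + 1 + 4 * fst z = 0.
Proof.
  intros [r [t [Hr [Ht Ez]]]]. subst z. cx.
  pose proof (sin2_cos2 t) as SC. unfold Rsqr in SC.
  assert (E : r * (r + / r + 4 * cos t) = r * r + 1 + 4 * (r * cos t)) by (field; lra).
  rewrite Ht in E.
  replace (r * cos t * (r * cos t) + r * sin t * (r * sin t) + 1 + 4 * (r * cos t))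
    with (r * r * (sin t * sin t + cos t * cos t) + 1 + 4 * (r * cos t)) by ring.
  rewrite SC. lra.
Qed.

Lemma gamma_of_eq (z : Cx) : Cnorm2 z > 1 -> Cnorm2 z + 1 + 4 * fst z = 0 -> gamma z.
Proof.
  destruct z as [z1 z2]. intros Hn Hf. cbv [Cnorm2 fst snd] in *.
  set (r := sqrt (z1 * z1 + z2 * z2)).
  assert (Hr2 : r * r = z1 * z1 + z2 * z2) by (apply sqrt_sqrt; lra).
  assert (Hr : r > 1) by (pose proof (sqrt_pos (z1 * z1 + z2 * z2)) as Hr0; fold r in Hr0; nra).
  set (a := z1 / r).
  assert (Ha : -1 <= a <= 1).
  { unfold a. assert (z1 * z1 <= r * r) by nra.
    split; apply (Rmult_le_reg_r r); try lra;
      unfold Rdiv; rewrite Rmult_assoc, Rinv_l by lra; nra. }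
  assert (Hs : r * sqrt (1 - a²) = Rabs z2).
  { rewrite <- (sqrt_square r) at 1 by lra. rewrite <- sqrt_mult_alt by nra.
    rewrite <- sqrt_Rsqr_abs. f_equal. unfold a, Rsqr.
    replace (r * r * (1 - z1 / r * (z1 / r))) with (r * r - z1 * z1) by (field; lra). lra. }
  assert (Heq : r + / r + 4 * a = 0).
  { unfold a. replace (r + / r + 4 * (z1 / r)) with ((r * r + 1 + 4 * z1) / r) by (field; lra).
    replace (r * r + 1 + 4 * z1) with 0 by lra. unfold Rdiv; ring. }
  destruct (Rle_dec 0 z2) as [H2|H2].
  - exists r, (acos a). rewrite cos_acos, sin_acos by auto.
    repeat split; auto. rewrite Hs, Rabs_right by lra. unfold a. f_equal. field. lra.
  - exists r, (- acos a). rewrite cos_neg, sin_neg, cos_acos, sin_acos by auto.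
    repeat split; auto.
    replace (r * - sqrt (1 - a²)) with (- (r * sqrt (1 - a²))) by ring.
    rewrite Hs, Rabs_left by lra. unfold a. f_equal; [field; lra|ring].
Qed.

Lemma X_outside (x : sphere) : Xset x -> outside_disk x.
Proof. destruct x; simpl; tauto. Qed.

Lemma Ureg_X (x : sphere) : Ureg x -> Xset x.
Proof.
  destruct x as [z|]; intros [Ho HD]; [|exact I]. split; auto. intros G.
  simpl in Ho. apply Cnorm_gt1 in Ho.
  rewrite side_refl_in, (gamma_eq z G) in HD by lra. unfold Rdiv in HD. lra.
Qed.

Lemma Ureg_2 : Ureg (Some (Cof 2)).
Proof.
  split; [simpl; apply Cnorm_gt1; cx; lra|].
  rewrite side_refl_in by (cx; lra). cx. apply Rdiv_lt_0_compat; lra.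
Qed.

Lemma X_side_nonzero (x : sphere) : Xset x -> side (refl_in x) <> 0.
Proof.
  destruct x as [z|]; intros HX; [|simpl; unfold side; cx; lra].
  destruct HX as [Hz G]. apply Cnorm_gt1 in Hz. intros E. apply G, gamma_of_eq; auto.
  rewrite side_refl_in in E by lra. unfold Rdiv in E.
  apply Rmult_integral in E. destruct E as [E|E]; auto.
  exfalso; apply (Rinv_neq_0_compat (Cnorm2 z)); lra.
Qed.

(** [0, 1] is connected: a locally constant property propagates from 0 to 1
    (take the supremum of the initial segment on which it holds). *)
Lemma unit_interval_connected (B : R -> Prop) :
  (forall l, 0 <= l <= 1 -> exists d, d > 0 /\
     forall u, 0 <= u <= 1 -> Rabs (u - l) < d -> (B u <-> B l)) ->
  B 0 -> B 1.
Proof.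
  intros HB H0.
  set (E := fun l => 0 <= l <= 1 /\ forall u, 0 <= u <= l -> B u).
  assert (E0 : E 0) by (split; [lra|]; intros u Hu; replace u with 0 by lra; auto).
  assert (Eb : bound E) by (exists 1; intros x [Hx _]; lra).
  destruct (completeness E Eb (ex_intro _ 0 E0)) as [l [Hub Hlub]].
  assert (Hl0 : 0 <= l) by (apply Hub, E0).
  assert (Hl1 : l <= 1) by (apply Hlub; intros x [Hx _]; lra).
  destruct (HB l (conj Hl0 Hl1)) as [d [Hd Hloc]].
  assert (Hex : exists x, E x /\ l - d < x).
  { apply NNPP; intros N. assert (Hu : is_upper_bound E (l - d)).
    { intros x Ex. destruct (Rle_lt_dec x (l - d)); auto.
      exfalso; apply N; exists x; split; auto; lra. }
    specialize (Hlub _ Hu); lra. }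
  destruct Hex as [x [[Hx Ex] Hxl]].
  assert (Hxl' : x <= l) by (apply Hub; split; auto).
  assert (Bl : B l)
    by (apply (Hloc x); [lra| rewrite Rabs_left1 by lra; lra | apply Ex; lra]).
  assert (Hm : E (Rmin 1 (l + d / 2))).
  { split; [unfold Rmin; destruct (Rle_dec 1 (l + d / 2)); lra|].
    intros u Hu. destruct (Rle_lt_dec u x) as [Hux|Hux]; [apply Ex; lra|].
    unfold Rmin in Hu; destruct (Rle_dec 1 (l + d / 2));
      apply (Hloc u); auto; try lra; apply Rabs_def1; lra. }
  specialize (Hub _ Hm). unfold Rmin in Hub; destruct (Rle_dec 1 (l + d / 2)); [|lra].
  replace 1 with l by lra. auto.
Qed.

Lemma clopen_path (S A : sphere -> Prop) (f : R -> sphere) (K : R) : 0 < K ->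
  rel_open S A -> rel_open S (fun x => ~ A x) ->
  (forall l, 0 <= l <= 1 -> S (f l)) ->
  (forall l u, chordal (f l) (f u) <= K * Rabs (l - u)) ->
  A (f 0) -> A (f 1).
Proof.
  intros HK HA HnA HS Hlip.
  apply (unit_interval_connected (fun l => A (f l))).
  intros l Hl. destruct (classic (A (f l))) as [Al|Al].
  - destruct (HA _ (HS l Hl) Al) as [d [Hd Hd']]. exists (d / K). split.
    { apply Rdiv_lt_0_compat; lra. }
    intros u Hu Hul. split; auto. intros _. apply Hd'; auto.
    pose proof (Hlip l u) as C. rewrite Rabs_minus_sym in Hul.
    apply (Rle_lt_trans _ (K * Rabs (l - u))); auto.
    apply (Rmult_lt_reg_r (/ K)); [apply Rinv_0_lt_compat; lra|].
    replace (K * Rabs (l - u) * / K) with (Rabs (l - u)) by (field; lra). auto.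
  - destruct (HnA _ (HS l Hl) Al) as [d [Hd Hd']]. exists (d / K). split.
    { apply Rdiv_lt_0_compat; lra. }
    intros u Hu Hul. split; [|tauto]. intros Au. exfalso.
    apply (Hd' (f u)); auto.
    pose proof (Hlip l u) as C. rewrite Rabs_minus_sym in Hul.
    apply (Rle_lt_trans _ (K * Rabs (l - u))); auto.
    apply (Rmult_lt_reg_r (/ K)); [apply Rinv_0_lt_compat; lra|].
    replace (K * Rabs (l - u) * / K) with (Rabs (l - u)) by (field; lra). auto.
Qed.

Lemma connected_of_paths (S : sphere -> Prop) (b : sphere) (K : R) : 0 < K ->
  (forall z, S z -> exists f : R -> sphere, f 0 = b /\ f 1 = z /\
     (forall l, 0 <= l <= 1 -> S (f l)) /\
     (forall l u, chordal (f l) (f u) <= K * Rabs (l - u))) ->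
  connected S.
Proof.
  intros HK Hpath A HA HnA x y Sx Sy Ax.
  destruct (Hpath x Sx) as [f [f0 [f1 [fS flip]]]].
  destruct (Hpath y Sy) as [g [g0 [g1 [gS glip]]]].
  assert (Ab : A b).
  { apply NNPP; intros Nb.
    assert (Nx : ~ A (f 1)).
    { apply (clopen_path S (fun x => ~ A x) f K); auto; [|congruence].
      intros z Sz Nz. destruct (HA z Sz (NNPP _ Nz)) as [d [Hd Hz]]. exists d. split; auto. }
    congruence. }
  rewrite <- g1. apply (clopen_path S A g K); auto. congruence.
Qed.

(** Radial scaling w |-> l w; for 0 <= l <= 1 it preserves the disk and
    the condition side > 0, which is what makes [Ureg] connected. *)
Definition scale (l : R) (w : Cx) : Cx := (l * fst w, l * snd w).

Lemma scale_disk (l : R) (w : Cx) : 0 <= l <= 1 -> Cnorm2 w < 1 -> Cnorm2 (scale l w) < 1.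
Proof. intros Hl H. destruct w as [a b]. unfold scale; cx. assert (l * l <= 1) by nra. nra. Qed.

(** side(l w) = l side(w) + (1 - l)(1 - l |w|^2). *)
Lemma scale_side (l : R) (w : Cx) : 0 <= l <= 1 -> Cnorm2 w < 1 -> side w > 0 ->
  side (scale l w) > 0.
Proof.
  intros Hl H D. destruct w as [a b]. unfold scale, side in *; cx.
  replace (1 + (l * a * (l * a) + l * b * (l * b)) + 4 * (l * a))
    with (l * (1 + (a * a + b * b) + 4 * a) + (1 - l) * (1 - l * (a * a + b * b))) by ring.
  destruct (Req_dec l 1) as [E|E]; [subst; nra|].
  assert (0 < (1 - l) * (1 - l * (a * a + b * b))) by (apply Rmult_lt_0_compat; nra).
  nra.
Qed.

Lemma scale_dist (l u : R) (w : Cx) : Cnorm2 w < 1 ->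
  Cnorm (Csub (scale l w) (scale u w)) <= Rabs (l - u).
Proof.
  intros H.
  replace (Csub (scale l w) (scale u w)) with (Cmul (l - u, 0) w)
    by (destruct w; unfold scale; cx; f_equal; ring).
  rewrite Cnorm_real. assert (Cnorm w < 1) by (apply Cnorm_lt1; auto).
  pose proof (Rabs_pos (l - u)). pose proof (Cnorm_nonneg w). nra.
Qed.

(** Every point of [Ureg] is joined to infinity by the reflected radius. *)
Lemma Ureg_connected : connected Ureg.
Proof.
  apply (connected_of_paths Ureg None 2); [lra|].
  intros z [Hz HD]. pose proof (refl_in_lt1 z Hz) as Hw.
  set (w := refl_in z) in *.
  exists (fun l => refl_out (scale l w)). repeat split.
  - unfold refl_out. destruct (Req_EM_T (Cnorm2 (scale 0 w)) 0) as [e|e]; auto.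
    exfalso; apply e. destruct w; unfold scale; cx; ring.
  - replace (scale 1 w) with w by (destruct w; unfold scale; cx; f_equal; ring).
    apply refl_out_in; auto.
  - apply refl_out_outside, scale_disk; auto.
  - rewrite refl_in_out. apply scale_side; auto.
  - intros l u. rewrite chordal_refl_out.
    eapply Rle_trans; [apply chordal_le_euclid|].
    pose proof (scale_dist l u w Hw). lra.
Qed.

Lemma Ureg_sub_U (x : sphere) : Ureg x -> Uset x.
Proof.
  intros Hx. exists Ureg. split; [apply Ureg_X|].
  split; [apply Ureg_connected|]. split; [apply Ureg_2|exact Hx].
Qed.

(** Inside X the sign of side(1/conj x) is locally constant, so [Ureg] is
    relatively clopen in the component U and contains it. *)
Lemma U_sub_Ureg (x : sphere) : Uset x -> Ureg x.
Proof.
  intros [S [HX [Hc [H2 Hx]]]].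
  assert (Hnear : forall x0 y, S x0 -> S y ->
    Rabs (side (refl_in x0) - side (refl_in y)) <= 8 * chordal x0 y).
  { intros x0 y Sx0 Sy.
    pose proof (X_outside _ (HX x0 Sx0)) as O0; pose proof (X_outside _ (HX y Sy)) as Oy.
    pose proof (side_lip _ _ (refl_in_lt1 _ O0) (refl_in_lt1 _ Oy)).
    pose proof (refl_dist_le_chordal x0 y O0 Oy). lra. }
  apply (Hc Ureg) with (Some (Cof 2)); auto; [| |apply Ureg_2].
  - intros x0 Sx0 [Ho HD]. exists (side (refl_in x0) / 8). split; [lra|].
    intros y Sy Hch. split; [apply X_outside, HX; auto|].
    pose proof (Rabs_le_inv _ _ (Hnear x0 y Sx0 Sy)). lra.
  - intros x0 Sx0 N.
    assert (HD : side (refl_in x0) < 0).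
    { pose proof (X_side_nonzero x0 (HX x0 Sx0)).
      destruct (Rlt_le_dec (side (refl_in x0)) 0) as [l|l]; auto.
      exfalso. apply N. split; [apply X_outside, HX; auto|lra]. }
    exists (- side (refl_in x0) / 8). split; [lra|].
    intros y Sy Hch [Hy HDy].
    pose proof (Rabs_le_inv _ _ (Hnear x0 y Sx0 Sy)). lra.
Qed.

Lemma point_of_params_lip (w w' : Cx) : Cnorm2 w < 1 -> Cnorm2 w' < 1 -> side w > 0 ->
  side w' <> 0 ->
  let g := fst (sum_of w) - fst (prod_of w) in
  let h := Cnorm (Csub (sum_of w') (sum_of w)) + Cnorm (Csub (prod_of w') (prod_of w)) in
  h <= g / 2 ->
  Cnorm (Csub w w') * (1 - Cnorm w) <= 8 * (g + Cnorm (prod_of w)) / (g * g) * h.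
Proof.
  intros Hw Hw' HD HD' g h Hh.
  assert (Hg : g > 0) by (apply params_gap_pos; auto).
  pose proof (klein_of_params_lip (sum_of w) (prod_of w) (sum_of w') (prod_of w') Hg Hh) as K.
  rewrite <- !klein_params in K by lra.
  pose proof (klein_expand w w' Hw Hw') as E. rewrite Cnorm_sub_sym in K.
  fold g h in K. unfold Rdiv in *. lra.
Qed.

Lemma Cnorm_C1 : Cnorm C1 = 1.
Proof. unfold Cnorm; cx. replace (1 * 1 + 0 * 0) with 1 by ring. apply sqrt_1. Qed.

Lemma inB_params (p q : Cx) (c : sphere) : inB p q -> is_Phi p q c ->
  Ureg c /\ Cadd p q = sum_of (refl_in c) /\ Cmul p q = prod_of (refl_in c).
Proof.
  intros [Hp [Hq _]] HP.
  assert (Hp1 : p <> C1) by (intros E; rewrite E, Cnorm_C1 in Hp; lra).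
  assert (Hq1 : q <> C1) by (intros E; rewrite E, Cnorm_C1 in Hq; lra).
  destruct (is_Phi_params p q c Hp1 Hq1 HP) as [HD [Hs Hm]].
  pose proof (refl_in_lt1 c (proj1 HP)) as Hw.
  apply Cnorm_gt1 in Hp; apply Cnorm_lt1 in Hq.
  repeat split; auto. destruct HP; auto.
  apply (side_pos p q); auto.
Qed.

Lemma is_Phi_unique (p q : Cx) (c c' : sphere) : inB p q -> is_Phi p q c -> is_Phi p q c' ->
  c = c'.
Proof.
  intros HB H1 H2.
  destruct (inB_params p q c HB H1) as [[O1 D1] [S1 M1]].
  destruct (inB_params p q c' HB H2) as [[O2 D2] [S2 M2]].
  rewrite <- (refl_out_in c O1), <- (refl_out_in c' O2). f_equal.
  apply params_inj; try apply refl_in_lt1; auto; try lra; congruence.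
Qed.

Section PhiMap.

Variable Phi : Cx -> Cx -> sphere.
Hypothesis HPhi : forall p q, inB p q -> is_Phi p q (Phi p q).

Lemma Phi_into_U (p q : Cx) : inB p q -> Uset (Phi p q).
Proof. intros HB. apply Ureg_sub_U, (inB_params p q _ HB (HPhi p q HB)). Qed.

(** Phi p q determines p + q and p q, hence p and q. *)
Lemma Phi_injective (p q p' q' : Cx) : inB p q -> inB p' q' -> Phi p q = Phi p' q' ->
  p = p' /\ q = q'.
Proof.
  intros HB HB' E.
  destruct (inB_params p q _ HB (HPhi p q HB)) as [_ [S M]].
  destruct (inB_params p' q' _ HB' (HPhi p' q' HB')) as [_ [S' M']].
  destruct HB as [Hp [Hq _]], HB' as [Hp' [Hq' _]].
  rewrite E in S, M. apply roots_unique; auto; congruence.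
Qed.

(** Every c in U is the critical point of the pair of roots of
    X^2 - sum_of(w) X + prod_of(w), w = 1/conj(c). *)
Lemma Phi_onto (x : sphere) : Uset x -> exists p q, inB p q /\ Phi p q = x.
Proof.
  intros HU. destruct (U_sub_Ureg x HU) as [Ho HD].
  pose proof (refl_in_lt1 x Ho) as Hw.
  destruct (params_roots (refl_in x) Hw HD) as [p [q [Hp [Hq [S M]]]]].
  pose proof (params_is_Phi p q _ Hw ltac:(lra) S M) as HP. rewrite refl_out_in in HP by auto.
  assert (HB : inB p q)
    by (split; [apply Cnorm_gt1; auto|split; [apply Cnorm_lt1; auto|exists x; auto]]).
  exists p, q. split; auto. apply (is_Phi_unique p q); auto.
Qed.

(** Phi is locally Lipschitz: (p, q) |-> (p + q, p q) |-> w |-> 1/conj(w). *)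
Lemma Phi_lip (p q : Cx) : inB p q -> exists d0 L, d0 > 0 /\ 0 <= L /\
  forall p' q', inB p' q' -> pdist p q p' q' < d0 ->
    chordal (Phi p q) (Phi p' q') <= L * pdist p q p' q'.
Proof.
  intros HB.
  destruct (inB_params p q _ HB (HPhi p q HB)) as [[O HD] [S M]].
  set (w := refl_in (Phi p q)) in *. pose proof (refl_in_lt1 _ O) as Hw. fold w in Hw.
  set (g := fst (sum_of w) - fst (prod_of w)).
  assert (Hg : g > 0) by (apply params_gap_pos; auto).
  assert (Hnw : 1 - Cnorm w > 0) by (apply Cnorm_lt1 in Hw; lra).
  set (Lk := 8 * (g + Cnorm (prod_of w)) / (g * g)).
  assert (HLk : 0 <= Lk).
  { unfold Lk. pose proof (Cnorm_nonneg (prod_of w)).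
    apply Rmult_le_pos; [lra|apply Rlt_le, Rinv_0_lt_compat; nra]. }
  pose proof (Cnorm_nonneg p).
  exists (g / (2 * (Cnorm p + 3))), (2 * Lk * (Cnorm p + 3) / (1 - Cnorm w)).
  split; [apply Rdiv_lt_0_compat; lra|].
  split; [apply Rmult_le_pos; [nra|apply Rlt_le, Rinv_0_lt_compat; lra]|].
  intros p' q' HB' Hd.
  destruct (inB_params p' q' _ HB' (HPhi p' q' HB')) as [[O' HD'] [S' M']].
  set (w' := refl_in (Phi p' q')) in *. pose proof (refl_in_lt1 _ O') as Hw'. fold w' in Hw'.
  pose proof (sum_prod_lip p q p' q' (proj1 (proj2 HB'))) as Hh.
  rewrite S, S', M, M' in Hh.
  set (pd := pdist p q p' q') in *.
  assert (Hpd : 0 <= pd) by (unfold pd, pdist; eapply Rle_trans; [apply Cnorm_nonneg|apply Rmax_l]).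
  set (h := Cnorm (Csub (sum_of w') (sum_of w)) + Cnorm (Csub (prod_of w') (prod_of w))) in *.
  assert (Hh2 : h <= g / 2).
  { apply (Rle_trans _ ((Cnorm p + 3) * pd)); auto.
    apply (Rmult_le_reg_r (/ (Cnorm p + 3))); [apply Rinv_0_lt_compat; lra|].
    replace ((Cnorm p + 3) * pd * / (Cnorm p + 3)) with pd by (field; lra).
    replace (g / 2 * / (Cnorm p + 3)) with (g / (2 * (Cnorm p + 3))) by (field; lra). lra. }
  pose proof (point_of_params_lip w w' Hw Hw' HD ltac:(lra) Hh2) as P. fold g Lk h in P.
  rewrite chordal_refl_in by auto. fold w w'.
  eapply Rle_trans; [apply chordal_le_euclid|].
  apply (Rmult_le_reg_r (1 - Cnorm w)); auto.
  replace (2 * Lk * (Cnorm p + 3) / (1 - Cnorm w) * pd * (1 - Cnorm w))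
    with (2 * (Lk * ((Cnorm p + 3) * pd))) by (field; lra).
  assert (Lk * h <= Lk * ((Cnorm p + 3) * pd)) by (apply Rmult_le_compat_l; auto).
  lra.
Qed.

(** The inverse is locally Lipschitz: x |-> w |-> (p + q, p q) |-> (p, q). *)
Lemma Phi_inv_lip (p q : Cx) : inB p q -> exists d0 L, d0 > 0 /\ 0 <= L /\
  forall p' q', inB p' q' -> chordal (Phi p q) (Phi p' q') < d0 ->
    pdist p q p' q' <= L * chordal (Phi p q) (Phi p' q').
Proof.
  intros HB.
  destruct (inB_params p q _ HB (HPhi p q HB)) as [[O HD] [S M]].
  set (w := refl_in (Phi p q)) in *. pose proof (refl_in_lt1 _ O) as Hw. fold w in Hw.
  destruct (params_lip w Hw HD) as [L [HL HLip]].
  destruct HB as [Hp [Hq _]].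
  destruct (roots_lip p q Hp Hq) as [Mr [HMr HRoots]].
  exists (Rmin (side w / 16) (1 / (L + 1))), (Mr * L).
  split; [apply Rmin_glb_lt; [lra|apply Rdiv_lt_0_compat; lra]|].
  split; [apply Rmult_le_pos; auto|].
  intros p' q' HB' Hch.
  destruct (inB_params p' q' _ HB' (HPhi p' q' HB')) as [[O' HD'] [S' M']].
  set (w' := refl_in (Phi p' q')) in *. pose proof (refl_in_lt1 _ O') as Hw'. fold w' in Hw'.
  pose proof (Rmin_l (side w / 16) (1 / (L + 1))); pose proof (Rmin_r (side w / 16) (1 / (L + 1))).
  set (c := chordal (Phi p q) (Phi p' q')) in *.
  pose proof (refl_dist_le_chordal _ _ O O') as Wc. fold w w' c in Wc.
  rewrite Cnorm_sub_sym in Wc.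
  pose proof (HLip w' Hw' ltac:(lra)) as P. rewrite <- S, <- M, <- S', <- M' in P.
  pose proof (Cnorm_nonneg (Csub w' w)).
  pose proof (Cnorm_nonneg (Csub (Cadd p' q') (Cadd p q))).
  pose proof (Cnorm_nonneg (Csub (Cmul p' q') (Cmul p q))).
  assert (Hsm : Cnorm (Csub (Cadd p' q') (Cadd p q)) + Cnorm (Csub (Cmul p' q') (Cmul p q)) <= L * c).
  { eapply Rle_trans; [apply P|]. apply Rmult_le_compat_l; auto. }
  assert (L * c <= 1).
  { apply (Rle_trans _ (L * (1 / (L + 1)))); [apply Rmult_le_compat_l; lra|].
    apply (Rmult_le_reg_r (L + 1)); [lra|].
    replace (L * (1 / (L + 1)) * (L + 1)) with L by (field; lra). lra. }
  destruct HB' as [Hp' [Hq' _]].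
  eapply Rle_trans; [apply HRoots; auto; lra|].
  rewrite Rmult_assoc. apply Rmult_le_compat_l; auto.
Qed.

Lemma Phi_continuous (p q : Cx) : inB p q -> forall eps, eps > 0 -> exists d, d > 0 /\
  forall p' q', inB p' q' -> pdist p q p' q' < d -> chordal (Phi p q) (Phi p' q') < eps.
Proof.
  intros HB eps Heps.
  destruct (Phi_lip p q HB) as [d0 [L [Hd0 [HL Hlip]]]].
  destruct (local_lip_cont (fun a => inB (fst a) (snd a)) (fun a => pdist p q (fst a) (snd a))
    (fun a => chordal (Phi p q) (Phi (fst a) (snd a))) d0 L Hd0 HL
    (fun a Ha Hd => Hlip (fst a) (snd a) Ha Hd) eps Heps) as [d [Hd Hc]].
  exists d. split; auto. intros p' q'. exact (Hc (p', q')).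
Qed.

Lemma Phi_inv_continuous (p q : Cx) : inB p q -> forall eps, eps > 0 -> exists d, d > 0 /\
  forall p' q', inB p' q' -> chordal (Phi p q) (Phi p' q') < d -> pdist p q p' q' < eps.
Proof.
  intros HB eps Heps.
  destruct (Phi_inv_lip p q HB) as [d0 [L [Hd0 [HL Hlip]]]].
  destruct (local_lip_cont (fun a => inB (fst a) (snd a))
    (fun a => chordal (Phi p q) (Phi (fst a) (snd a))) (fun a => pdist p q (fst a) (snd a))
    d0 L Hd0 HL (fun a Ha Hd => Hlip (fst a) (snd a) Ha Hd) eps Heps) as [d [Hd Hc]].
  exists d. split; auto. intros p' q'. exact (Hc (p', q')).
Qed.

End PhiMap.

Theorem mainTheorem14 :
  forall Phi : Cx -> Cx -> sphere,
    (forall p q, inB p q -> is_Phi p q (Phi p q)) ->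
    (* Phi maps \mathcal B into U *)
    (forall p q, inB p q -> Uset (Phi p q)) /\
    (* injective on \mathcal B *)
    (forall p q p' q', inB p q -> inB p' q' -> Phi p q = Phi p' q' ->
        p = p' /\ q = q') /\
    (* onto U *)
    (forall w, Uset w -> exists p q, inB p q /\ Phi p q = w) /\
    (* continuous on \mathcal B *)
    (forall p q, inB p q -> forall eps, eps > 0 -> exists d, d > 0 /\
        forall p' q', inB p' q' -> pdist p q p' q' < d ->
          chordal (Phi p q) (Phi p' q') < eps) /\
    (* inverse continuous on U *)
    (forall p q, inB p q -> forall eps, eps > 0 -> exists d, d > 0 /\
        forall p' q', inB p' q' -> chordal (Phi p q) (Phi p' q') < d ->
          pdist p q p' q' < eps).
Proof.
  intros Phi HPhi.
  split; [exact (Phi_into_U Phi HPhi)|].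
  split; [exact (Phi_injective Phi HPhi)|].
  split; [exact (Phi_onto Phi HPhi)|].
  split; [exact (Phi_continuous Phi HPhi)|exact (Phi_inv_continuous Phi HPhi)].
Qed.
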